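(* There exists an optimal threshold-type age-dependent policy $\phi^*$ of the MDP $\Lambda$ whose action order $(b_1,\dots,b_K)$ satisfies $Q_{b_k}\le Q_{b_{k+1}}$ for all $1\le k<K$; equivalently, $s\mapsto Q_{\phi^*(s)}$ is nondecreasing in the state $s$.
   Context: Fix $N\in\mathbb{N}^+$ vehicle types $\mathcal{N}=\{1,\dots,N\}$ with arrival probabilities $p_n\in(0,1]$, mean operational costs $c_n\ge0$ and mean sensing capabilities $r_n\in(0,1]$. Fix $\beta\in(0,1)$, $\epsilon>0$. Actions: $\mathcal{A}=2^{\mathcal{N}}$. Success probability $Q_\emptyset=0$, $Q_a=1-\prod_{n\in a}(1-r_np_n)$; expected recruitment cost $E_a=\sum_{n\in a}p_nc_n$. Immediate cost at state $\delta\in\mathbb{N}^+$: $u(\delta,a)=(1-\beta)E_a-\beta\epsilon\big(Q_a(\delta^2+2\delta)-(1+\delta)^2\big)$. MDP $\Lambda$: states $\mathbb{N}^+$; from state $s$ under action $a$ move to $1$ w.p. $Q_a$ and to $s+1$ w.p. $1-Q_a$; average cost $V(\phi)=\limsup_{T\to\infty}\frac1T\mathbb{E}^\phi[\sum_{t=1}^Tu(S(t),A(t))]$, $S(1)=1$, to be minimized. A threshold-type age-dependent policy is a deterministic stationary policy $\phi:\mathbb{N}^+\to\mathcal{A}$ for which there are $K\in\mathbb{N}^+$, an action order $(b_1,\dots,b_K)$ of actions with $b_k\ne b_{k+1}$, and integer thresholds $1\le\theta_{b_1\to b_2}\le\dots\le\theta_{b_{K-1}\to b_K}$ such that $\phi(s)=b_k$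 for $\theta_{b_{k-1}\to b_k}\le s<\theta_{b_k\to b_{k+1}}$ (with the conventions $\theta_{b_0\to b_1}=1$, $\theta_{b_K\to b_{K+1}}=\infty$). *)

From HB Require Import structures.
From mathcomp Require Import all_boot all_order all_algebra.
From mathcomp Require Import all_classical all_reals.
From mathcomp Require Import topology normedtype sequences.
Set Implicit Arguments. Unset Strict Implicit. Unset Printing Implicit Defensive.
Import Order.TTheory GRing.Theory Num.Theory.
Local Open Scope ring_scope.

Section Model.
Variables (R : realType) (N : nat) (p c r : 'I_N -> R) (beta eps : R).

(* Actions: subsets of the vehicle types {1..N}, represented by 'I_N. *)
Definition action := {set 'I_N}.

(* Success probability Q_a (empty product = 1, so Q_emptyset = 0). *)
Definition Qa (a : action) : R := 1 - \prod_(n in a) (1 - r n * p n).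

Definition Ea (a : action) : R := \sum_(n in a) p n * c n.

Definition ucost (d : nat) (a : action) : R :=
  (1 - beta) * Ea a
  - beta * eps * (Qa a * (d%:R ^+ 2 + 2 * d%:R) - (1 + d%:R) ^+ 2).

(* General (history-dependent, randomized) policy: given the history of past
   (state, action) pairs and the current state, a probability on actions. *)
Definition policy := seq (nat * action) -> nat -> action -> R.

Definition valid_policy (pi : policy) : Prop :=
  (forall h s a, 0 <= pi h s a) /\ (forall h s, \sum_(a : action) pi h s a = 1).

Fixpoint expcost (pi : policy) (T : nat) (h : seq (nat * action)) (s : nat) : R :=
  match T with
  | 0 => 0
  | T'.+1 => \sum_(a : action) pi h s a *
        (ucost s a + Qa a * expcost pi T' (rcons h (s, a)) 1
                   + (1 - Qa a) * expcost pi T' (rcons h (s, a)) s.+1)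
  end.

Definition avg_cost (pi : policy) : \bar R :=
  limn_esup (fun T : nat => ((expcost pi T [::] 1) / T%:R)%:E).

Definition det_policy (phi : nat -> action) : policy :=
  fun _ s a => (a == phi s)%:R.

Definition optimal (phi : nat -> action) : Prop :=
  forall pi : policy, valid_policy pi ->
    (avg_cost (det_policy phi) <= avg_cost pi)%E.

(* phi is threshold-type with action order (b 1, ..., b K) and thresholds
   theta k = theta_{b_k -> b_{k+1}} (1 <= k < K); conventions theta_{b_0->b_1} = 1,
   theta_{b_K -> b_{K+1}} = infinity.  Only states s >= 1 are constrained. *)
Definition threshold_type (phi : nat -> action) (K : nat) (b : nat -> action)
    (theta : nat -> nat) : Prop :=
  [/\ (0 < K)%N,
      (forall k, (1 <= k < K)%N -> b k != b k.+1),
      (1 < K)%N -> (1 <= theta 1)%N,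
      (forall k, (1 <= k)%N -> (k.+1 < K)%N -> (theta k <= theta k.+1)%N) &
      (forall s k, (1 <= s)%N -> (1 <= k <= K)%N ->
         (k == 1%N) || (theta k.-1 <= s)%N ->
         (k == K) || (s < theta k)%N ->
         phi s = b k)].

End Model.

From mathcomp Require Import all_boot all_order all_algebra.
From mathcomp Require Import all_classical all_reals.
From mathcomp Require Import ereal topology normedtype sequences.
From mathcomp Require Import ring lra zify.
Import Order.TTheory GRing.Theory Num.Theory.
Local Open Scope ring_scope.
Set Implicit Arguments. Unset Strict Implicit.

(* Write the optimality equation with relative values h and h 1 = 0 as
     h s + g = beta eps (1 + s)^2 + h (s + 1) + min_a [(1 - beta) E_a - Q_a L s],
   where L s = beta eps (s^2 + 2 s) + h (s + 1) is the value of a success in state s.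
   An exchange argument shows that the minimizers of (1 - beta) E_a - Q_a L have a success
   probability nondecreasing in L, and that beyond some L0 a fixed action of maximal success
   probability is optimal.  So if h is nondecreasing, so is L, hence s |-> Q of the optimal
   action, and the optimal policy is eventually constant: a threshold policy with the claimed
   action order.
   A solution is built explicitly.  Beyond a state M0 the constant action makes h an explicit
   quadratic; below M0, h is computed by backward Bellman recursion, and g is the root of the
   nonincreasing Lipschitz map g |-> h_g 1.  Monotonicity of h follows from the equation by
   downward induction from M0.  Optimality is the usual verification argument; against an
   arbitrary policy the quadratic growth of h is absorbed by replacing h with theta h for
   some theta < 1 and using that u s a grows like (1 - Q_a) (1 + s)^2. *)

Section ThresholdRepresentation.
Variables (N : nat) (d : Order.disp_t) (T : porderType d) (F : action N -> T).

Lemma threshold_type_snoc (f f' : nat -> action N) K b theta t x :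
  threshold_type f' K b theta -> (0 < t)%N -> b K != x ->
  (forall k, (1 <= k < K)%N -> (theta k < t)%N) ->
  (forall s, (s < t)%N -> f s = f' s) -> (forall s, (t <= s)%N -> f s = x) ->
  threshold_type f K.+1 (fun k => if k == K.+1 then x else b k)
    (fun k => if k == K then t else theta k).
Proof.
case=> K_gt0 b_neq theta1 theta_mono f'b t_gt0 bK_neq theta_lt ff' fx; split=> //.
- move=> k /andP[k1 kK]; have [->|kK'] := eqVneq k K.
    by rewrite eqxx (ltn_eqF (ltnSn K)).
  have /negbTE-> : k != K.+1 by lia.
  have /negbTE-> : k.+1 != K.+1 by lia.
  by apply: b_neq; lia.
- by move=> K1; case: ifP => [_ // | /eqP K1']; apply: theta1; lia.
- move=> k k1 kK; have /negbTE-> : k != K by lia.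
  case: ifP => [/eqP kK' | /eqP kK']; first by apply/ltnW/theta_lt; lia.
  by apply: theta_mono; lia.
move=> s k s1 /andP[k1 kK]; have [kK'|kK'|->] := ltngtP k K => lo hi.
- have /negbTE k_neqS : k != K.+1 by lia.
  have /negbTE k_pred_neq : k.-1 != K by lia.
  rewrite /= k_pred_neq in lo; rewrite /= k_neqS /= in hi; rewrite k_neqS.
  have k_range : (1 <= k < K)%N by lia.
  have := theta_lt k k_range => theta_k.
  rewrite ff'; last lia.
  by apply: f'b => //; [lia | rewrite hi orbT].
- have kE : k = K.+1 by lia.
  by rewrite kE eqxx in lo *; apply: fx; move: lo => /=; rewrite eqxx; lia.
have /negbTE K_neqS : K != K.+1 by lia.
have /negbTE K_pred_neq : K.-1 != K by lia.
rewrite K_neqS in hi; rewrite K_pred_neq in lo; rewrite K_neqS ff' //.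
by apply: f'b => //; [lia | rewrite eqxx].
Qed.

Lemma threshold_type_of_eventually_constant M (f : nat -> action N) :
  (forall s, (M.+1 <= s)%N -> f s = f M.+1) ->
  (forall s, (F (f s) <= F (f s.+1))%O) ->
  exists K b theta, [/\ threshold_type f K b theta, b K = f M.+1,
    (forall k, (1 <= k < K)%N -> (theta k <= M.+1)%N) &
    (forall k, (1 <= k < K)%N -> (F (b k) <= F (b k.+1))%O)].
Proof.
elim: M f => [|M IH] f f_const f_mono.
  exists 1%N, (fun=> f 1%N), (fun=> 1%N); split=> //.
  by split=> // [k|s k s1 _ _ _]; [lia | exact: f_const].
have [eqM|neqM] := eqVneq (f M.+1) (f M.+2).
  have f_const' s : (M.+1 <= s)%N -> f s = f M.+1.
    by rewrite leq_eqVlt => /orP[/eqP<- // | /f_const->]; rewrite eqM.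
  have [K [b [theta [f_thr bK theta_le b_mono]]]] := IH f f_const' f_mono.
  exists K, b, theta; split=> //; first by rewrite bK eqM.
  by move=> k /theta_le; lia.
pose f' s := f (minn s M.+1).
have f'_const s : (M.+1 <= s)%N -> f' s = f' M.+1.
  by move=> sM; rewrite /f' minnn (minn_idPr sM).
have f'_mono s : (F (f' s) <= F (f' s.+1))%O.
  rewrite /f'; have [sM|sM] := leqP s M; first by rewrite !(minn_idPl _) // ltnW.
  by rewrite !(minn_idPr _) // ltnW.
have [K [b [theta [f'_thr bK theta_le b_mono]]]] := IH f' f'_const f'_mono.
have bK' : b K = f M.+1 by rewrite bK /f' minnn.
exists K.+1, (fun k => if k == K.+1 then f M.+2 else b k),
  (fun k => if k == K then M.+2 else theta k); split.
- apply: threshold_type_snoc f'_thr _ _ _ _ f_const => //; first by rewrite bK'.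
  by move=> s sM; rewrite /f' (minn_idPl _).
- by rewrite eqxx.
- move=> k kK; case: ifP => // /eqP kK'; apply/leqW/theta_le; lia.
move=> k kK; have [->|kK'] := eqVneq k K.
  by rewrite eqxx (ltn_eqF (ltnSn K)) bK'.
have /negbTE-> : k != K.+1 by lia.
have /negbTE-> : k.+1 != K.+1 by lia.
by apply: b_mono; lia.
Qed.

End ThresholdRepresentation.

Lemma div_natr_le (R : archiRealFieldType) (C e : R) (n : nat) :
  0 < e -> (Num.truncn (C / e) < n)%N -> C / n%:R <= e.
Proof.
move=> e_gt0 ltn; have n_gt0 : (0 < n)%N by lia.
rewrite ler_pdivrMr ?ltr0n // -ler_pdivrMl //.
by rewrite mulrC; apply/ltW/(lt_le_trans (truncnS_gt _)); rewrite ler_nat.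
Qed.

Section RealFacts.
Local Open Scope classical_set_scope.

Lemma limn_esup_le_add_div (R : realType) (x : nat -> R) (g C : R) :
  (forall n, (0 < n)%N -> x n <= g + C / n%:R) ->
  (limn_esup (fun n => (x n)%:E) <= g%:E)%E.
Proof.
move=> x_le; apply/lee_addgt0Pr => e e_gt0; rewrite /limn_esup limf_esupE.
pose m := (Num.truncn (C / e)).+1.
apply: (@le_trans _ _ (ereal_sup ((fun n => (x n)%:E) @` [set k | (m <= k)%N]))).
  by apply: ereal_inf_lbound; exists [set k | (m <= k)%N] => //=; exists m.
apply: ge_ereal_sup => _ [n /= mn <-]; rewrite -EFinD lee_fin.
apply: le_trans (x_le n _) _; first by rewrite /m in mn; lia.
by rewrite lerD2l div_natr_le.
Qed.

Lemma limn_esup_ge_sub_div (R : realType) (x : nat -> R) (g C : R) :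
  (forall n, (0 < n)%N -> g - C / n%:R <= x n) ->
  (g%:E <= limn_esup (fun n => (x n)%:E))%E.
Proof.
move=> x_ge; rewrite /limn_esup limf_esupE.
apply: le_ereal_inf_tmp => _ [A [m _ mA] <-]; apply/lee_subgt0Pr => e e_gt0.
pose n := maxn m (Num.truncn (C / e)).+1.
apply: le_ereal_sup_tmp; exists (x n)%:E; first by exists n => //; apply: mA; rewrite /= leq_maxl.
rewrite -EFinB lee_fin; apply: le_trans (x_ge n _); last by rewrite /n; lia.
by rewrite lerD2l lerN2 div_natr_le // leq_maxr.
Qed.

Lemma nonincreasing_lipschitz_root (R : realType) (F : R -> R) (L G : R) :
  0 < L -> (forall x y, x <= y -> 0 <= F x - F y <= (y - x) * L) ->
  0 <= F 0 -> (forall x, 0 <= F x -> x <= G) -> exists2 x, 0 <= x & F x = 0.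
Proof.
move=> L_gt0 F_lip F0 F_bound; pose S := [set x | 0 <= F x].
have S_sup : has_sup S by split; [exists 0 | exists G => x; exact: F_bound].
have S0 : S 0 by [].
have x_ge0 : 0 <= sup S := sup_upper_bound S_sup S0.
exists (sup S) => //.
apply/eqP; rewrite eq_le !leNgt; apply/andP; split; apply/negP => Fx.
  have x_le : sup S <= sup S + F (sup S) / L by rewrite lerDl divr_ge0 // ltW.
  have /andP[_ lip] := F_lip _ _ x_le.
  have : S (sup S + F (sup S) / L).
    by move: lip; rewrite /S /= addrAC subrr add0r divfK ?gt_eqF //; lra.
  by move=> /(sup_upper_bound S_sup); rewrite gerDl leNgt divr_gt0.
have eps_gt0 : 0 < - F (sup S) / L by rewrite divr_gt0 // oppr_gt0.
have [y Sy xy] := sup_adherent eps_gt0 S_sup.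
have /andP[_ lip] := F_lip _ _ (sup_upper_bound S_sup Sy).
have : (sup S - y) * L < - F (sup S) by rewrite -ltr_pdivlMr //; lra.
by move: Sy; rewrite /S /=; lra.
Qed.

End RealFacts.

Lemma mul_sqr_le_cube_add (R : realFieldType) (B D x : R) :
  0 <= B -> 0 < D -> 0 <= x -> B * x ^+ 2 <= D * x ^+ 3 + B ^+ 3 / D ^+ 2.
Proof.
move=> B_ge0 D_gt0 x_ge0.
have cube_ge0 : 0 <= D * x ^+ 3 by rewrite mulr_ge0 ?exprn_ge0 // ltW.
have const_ge0 : 0 <= B ^+ 3 / D ^+ 2 by rewrite divr_ge0 ?exprn_ge0 // ltW.
have [xBD|BDx] := lerP x (B / D).
  have : B * x ^+ 2 <= B * (B / D) ^+ 2.
    by apply: ler_wpM2l => //; rewrite ler_sqr ?nnegrE // divr_ge0 // ltW.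
  have -> : B * (B / D) ^+ 2 = B ^+ 3 / D ^+ 2 by field; rewrite gt_eqF.
  lra.
have : B * x ^+ 2 <= D * x * x ^+ 2.
  by apply: ler_wpM2r; [exact: exprn_ge0 | apply/ltW; rewrite mulrC -ltr_pdivrMr].
rewrite -mulrA -exprS; lra.
Qed.

Lemma succ_cube_convex_le (R : realDomainType) (q x : R) : 0 <= q <= 1 -> 0 <= x ->
  q + (1 - q) * (x + 1) ^+ 3 <= 1 + x ^+ 3 + 3 * ((1 - q) * (1 + x) ^+ 2).
Proof.
move=> /andP[q_ge0 q_le1] x_ge0.
have : 0 <= q * x ^+ 3 by rewrite mulr_ge0 ?exprn_ge0.
have : 0 <= (1 - q) * (3 * x + 2) by rewrite mulr_ge0 ?subr_ge0 //; lra.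
nra.
Qed.

Lemma minimizer_exchange (T : Type) (R : realDomainType) (f q : T -> R) (L L' : R) (a b : T) :
  L < L' -> (forall x, f a - q a * L <= f x - q x * L) ->
  (forall x, f b - q b * L' <= f x - q x * L') -> q a <= q b.
Proof. by move=> LL' /(_ b) a_min /(_ a) b_min; nra. Qed.

Lemma sum_indicator_mul (T : finType) (R : pzSemiRingType) (x : T) (F : T -> R) :
  \sum_(a : T) (a == x)%:R * F a = F x.
Proof. by rewrite (bigD1 x) //= eqxx mul1r big1 ?addr0 // => a /negbTE->; rewrite mul0r. Qed.

Lemma QaC (R : realType) (N : nat) (p r : 'I_N -> R) (a : action N) : Qa p r a = Qa r p a.
Proof. by rewrite /Qa; under eq_bigr do rewrite mulrC. Qed.

Section Model.
Variables (R : realType) (N : nat) (p c r : 'I_N -> R) (beta eps : R).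
Hypotheses (N_gt0 : (0 < N)%N) (p_range : forall n, 0 < p n <= 1)
  (c_ge0 : forall n, 0 <= c n) (r_range : forall n, 0 < r n <= 1)
  (beta_range : 0 < beta < 1) (eps_gt0 : 0 < eps).

Local Notation Q := (Qa p r).
Local Notation E := (Ea p c).
Local Notation u := (ucost p c r beta eps).
Local Notation full := [set: 'I_N]%SET.

Lemma beta_eps_gt0 : 0 < beta * eps.
Proof. by case/andP: beta_range => beta_gt0 _; rewrite mulr_gt0. Qed.

Lemma one_sub_beta_gt0 : 0 < 1 - beta.
Proof. by case/andP: beta_range => _; rewrite subr_gt0. Qed.

Lemma rp_gt0 n : 0 < r n * p n.
Proof.
by case/andP: (r_range n) => r_gt0 _; case/andP: (p_range n) => p_gt0 _; rewrite mulr_gt0.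
Qed.

Lemma fail_factor_range n : 0 <= 1 - r n * p n <= 1.
Proof.
have /andP[r_gt0 r_le1] := r_range n; have /andP[p_gt0 p_le1] := p_range n.
have rp_le1 : r n * p n <= 1 by apply: mulr_ile1 => //; apply: ltW.
by have := rp_gt0 n; rewrite subr_ge0 rp_le1 gerBl => /ltW.
Qed.

Lemma fail_prod_range (P : pred 'I_N) : 0 <= \prod_(n | P n) (1 - r n * p n) <= 1.
Proof.
apply/andP; split; first by apply: prodr_ge0 => n _; case/andP: (fail_factor_range n).
by apply: prodr_ile1 => n _; exact: fail_factor_range.
Qed.

Lemma Q_ge0 a : 0 <= Q a.
Proof. by rewrite subr_ge0; case/andP: (fail_prod_range (mem a)). Qed.

Lemma Q_le1 a : Q a <= 1.
Proof. by rewrite gerBl; case/andP: (fail_prod_range (mem a)). Qed.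

Lemma Q_le_full a : Q a <= Q full.
Proof.
rewrite lerD2l lerN2 (bigID (mem a)) /=.
under eq_bigl do rewrite finset.in_setT.
apply: ler_piMr; first by case/andP: (fail_prod_range (mem a)).
by case/andP: (fail_prod_range (fun n => (n \in full) && (n \notin a))).
Qed.

Lemma Q_full_gt0 : 0 < Q full.
Proof.
pose n0 : 'I_N := Ordinal N_gt0.
rewrite subr_gt0 (bigD1 n0) ?finset.in_setT //=; apply: (@le_lt_trans _ _ (1 - r n0 * p n0)).
  apply: ler_piMr; first by case/andP: (fail_factor_range n0).
  by case/andP: (fail_prod_range (fun n => (n \in full) && (n != n0))).
by rewrite gtrBl rp_gt0.
Qed.

Lemma pc_ge0 n : 0 <= p n * c n.
Proof. by case/andP: (p_range n) => p_gt0 _; rewrite mulr_ge0 ?c_ge0 // ltW. Qed.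

Lemma E_ge0 a : 0 <= E a.
Proof. by apply: sumr_ge0 => n _; exact: pc_ge0. Qed.

Lemma E_le_full a : E a <= E full.
Proof.
rewrite [leRHS](bigID (mem a)) /=.
have -> : \sum_(n in full | n \in a) p n * c n = E a.
  by apply: eq_bigl => n; rewrite finset.in_setT.
rewrite lerDl; apply: sumr_ge0 => n _; exact: pc_ge0.
Qed.

Lemma ucostE s a :
  u s a = (1 - beta) * E a + beta * eps * ((1 - Q a) * (1 + s%:R) ^+ 2 + Q a).
Proof. by rewrite /ucost; ring. Qed.

Lemma ucost_ge s a : beta * eps * ((1 - Q a) * (1 + s%:R) ^+ 2) <= u s a.
Proof.
have := E_ge0 a; have := Q_ge0 a; have := beta_eps_gt0; have := one_sub_beta_gt0.
rewrite ucostE; nra.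
Qed.

Lemma ucost_ge0 s a : 0 <= u s a.
Proof.
apply: le_trans (ucost_ge s a); rewrite mulr_ge0 ?(ltW beta_eps_gt0) //.
by rewrite mulr_ge0 ?sqr_ge0 // subr_ge0 Q_le1.
Qed.

Lemma ucost_mono s a : u s a <= u s.+1 a.
Proof.
rewrite !ucostE lerD2l ler_wpM2l ?(ltW beta_eps_gt0) // lerD2r.
rewrite ler_wpM2l ?subr_ge0 ?Q_le1 // -natr1.
by have : 0 <= s%:R :> R by []; nra.
Qed.

Definition reduced_cost (L : R) (a : action N) : R := (1 - beta) * E a - Q a * L.

Definition best (L : R) : action N := [arg min_(a < full) reduced_cost L a]%O.

Lemma best_min L a : reduced_cost L (best L) <= reduced_cost L a.
Proof. by rewrite /best; case: arg_minP => // b _; apply. Qed.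

Lemma Q_best_mono L L' : L <= L' -> Q (best L) <= Q (best L').
Proof.
rewrite le_eqVlt => /orP[/eqP-> // | LL'].
exact: (minimizer_exchange (f := fun a => (1 - beta) * E a)) LL' (best_min L) (best_min L').
Qed.

(* Any upper bound on the finitely many ratios below would do; the sum avoids a maximum. *)
Definition L0 : R :=
  1 + \sum_(b : action N | Q b < Q full) (1 - beta) * E full / (Q full - Q b).

Lemma gap_cost_lt L b : L0 <= L -> Q b < Q full -> (1 - beta) * E full < (Q full - Q b) * L.
Proof.
move=> L0L Qb; rewrite [ltRHS]mulrC -ltr_pdivrMr ?subr_gt0 //; apply: lt_le_trans L0L.
have other_terms_ge0 :
    0 <= \sum_(b' | (Q b' < Q full) && (b' != b)) (1 - beta) * E full / (Q full - Q b').
  apply: sumr_ge0 => b' /andP[Qb' _].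
  by rewrite divr_ge0 ?subr_ge0 ?(ltW Qb') ?mulr_ge0 ?E_ge0 ?(ltW one_sub_beta_gt0).
rewrite /L0 (bigD1 b) //=; lra.
Qed.

Definition a_star : action N := best L0.

Lemma Q_a_star : Q a_star = Q full.
Proof.
apply/eqP; rewrite eq_le Q_le_full /= leNgt; apply/negP => Qlt.
have := best_min L0 full; rewrite -/a_star /reduced_cost.
have := gap_cost_lt (lexx L0) Qlt.
have : 0 <= (1 - beta) * E a_star by rewrite mulr_ge0 ?E_ge0 ?(ltW one_sub_beta_gt0).
lra.
Qed.

Lemma a_star_min L b : L0 <= L -> reduced_cost L a_star <= reduced_cost L b.
Proof.
move=> L0L; rewrite /reduced_cost Q_a_star.
have Eb_ge0 : 0 <= (1 - beta) * E b by rewrite mulr_ge0 ?E_ge0 ?(ltW one_sub_beta_gt0).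
have [Qb | Qb] := ltrP (Q b) (Q full).
  have : (1 - beta) * E a_star <= (1 - beta) * E full.
    by rewrite ler_wpM2l ?E_le_full ?(ltW one_sub_beta_gt0).
  have := gap_cost_lt L0L Qb; lra.
have QbE : Q b = Q full by apply/eqP; rewrite eq_le Q_le_full.
by have := best_min L0 b; rewrite /reduced_cost -/a_star Q_a_star QbE; lra.
Qed.

Definition success_value (s : nat) (v : R) : R :=
  beta * eps * (s%:R ^+ 2 + 2 * s%:R) + v.

Lemma bellman_objectiveE s g v a : u s a - g + (1 - Q a) * v =
  reduced_cost (success_value s v) a + (beta * eps * (1 + s%:R) ^+ 2 - g + v).
Proof. by rewrite /ucost /reduced_cost /success_value; ring. Qed.

Definition bellman (s : nat) (g v : R) : R :=
  let a := best (success_value s v) in u s a - g + (1 - Q a) * v.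

Lemma bellman_le s g v a : bellman s g v <= u s a - g + (1 - Q a) * v.
Proof. by rewrite /bellman !bellman_objectiveE lerD2r best_min. Qed.

Lemma bellman_lipschitz s g g' v v' e : g <= g' -> v' <= v -> v - v' <= e ->
  0 <= bellman s g v - bellman s g' v' <= (g' - g) + e.
Proof.
move=> gg' vv' vv'e; apply/andP; split.
  have := bellman_le s g' v' (best (success_value s v)); rewrite /bellman /=.
  set a := best (success_value s v); have : (1 - Q a) * v' <= (1 - Q a) * v.
    by rewrite ler_wpM2l ?subr_ge0 ?Q_le1.
  lra.
have := bellman_le s g v (best (success_value s v')); rewrite /bellman /=.
set a := best (success_value s v'); have : (1 - Q a) * (v - v') <= v - v'.
  by rewrite ler_piMl ?subr_ge0 // gerBl Q_ge0.
lra.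
Qed.

(* With [u s a_star = tail_A + tail_B * (1 + s)^2], the coefficients of the quadratic [tail g]
   are obtained by matching powers of [s] in
   [tail g s = u s a_star - g + (1 - Q a_star) * tail g s.+1]. *)
Definition tail_A : R := (1 - beta) * E a_star + beta * eps * Q full.
Definition tail_B : R := beta * eps * (1 - Q full).
Definition tail_c2 : R := tail_B / Q full.
Definition tail_c1 : R := (2 * tail_B + 2 * (1 - Q full) * tail_c2) / Q full.
Definition tail_c0 : R := (tail_A + tail_B + (1 - Q full) * (tail_c2 + tail_c1)) / Q full.
Definition tail0 (s : nat) : R := tail_c2 * s%:R ^+ 2 + tail_c1 * s%:R + tail_c0.
Definition tail (g : R) (s : nat) : R := tail0 s - g / Q full.

Lemma tail_bellman g s : tail g s = u s a_star - g + (1 - Q a_star) * tail g s.+1.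
Proof.
have uE : u s a_star = tail_A + tail_B * (1 + s%:R) ^+ 2.
  by rewrite ucostE Q_a_star /tail_A /tail_B; ring.
rewrite uE Q_a_star /tail /tail0 /tail_c0 /tail_c1 /tail_c2 -natr1.
by field; rewrite gt_eqF ?Q_full_gt0.
Qed.

Lemma tail_coefs_ge0 : [/\ 0 <= tail_c2, 0 <= tail_c1 & 0 <= tail_c0].
Proof.
have q_inv_ge0 : 0 <= (Q full)^-1 by rewrite invr_ge0 ltW ?Q_full_gt0.
have q_le1 : 0 <= 1 - Q full by rewrite subr_ge0 Q_le1.
have B_ge0 : 0 <= tail_B by rewrite mulr_ge0 ?(ltW beta_eps_gt0).
have A_ge0 : 0 <= tail_A.
  by apply: addr_ge0; apply: mulr_ge0;
    rewrite ?E_ge0 ?Q_ge0 ?(ltW one_sub_beta_gt0) ?(ltW beta_eps_gt0).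
have c2_ge0 : 0 <= tail_c2 by rewrite mulr_ge0.
have c1_ge0 : 0 <= tail_c1.
  by apply: mulr_ge0 => //; have := mulr_ge0 q_le1 c2_ge0; lra.
split=> //; apply: mulr_ge0 => //.
by have := mulr_ge0 q_le1 (addr_ge0 c2_ge0 c1_ge0); lra.
Qed.

Lemma tail0_ge0 s : 0 <= tail0 s.
Proof.
case: tail_coefs_ge0 => c2_ge0 c1_ge0 c0_ge0.
by apply: addr_ge0 => //; apply: addr_ge0; apply: mulr_ge0 => //; exact: exprn_ge0.
Qed.

Lemma tail_mono g s : tail g s <= tail g s.+1.
Proof.
rewrite /tail /tail0 -natr1 !lerD2r; case: tail_coefs_ge0 => c2_ge0 c1_ge0 _.
by have : 0 <= s%:R :> R by []; nra.
Qed.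

Lemma tail_le_quadratic g s :
  tail g s <= (tail_c2 + tail_c1) * s%:R ^+ 2 + (tail_c0 - g / Q full).
Proof.
rewrite /tail /tail0 addrA lerD2r mulrDl lerD2r lerD2l.
case: tail_coefs_ge0 => _ c1_ge0 _; apply: ler_wpM2l => //.
by rewrite -natrX ler_nat; case: s => // s; rewrite leq_pmulr.
Qed.

Definition g_max : R := Q full * tail0 1.

Definition M0 : nat := (Num.truncn ((L0 + g_max / Q full) / (beta * eps))).+1.

Lemma success_value_tail_ge s g : (M0 <= s)%N -> 0 <= g <= g_max ->
  L0 <= success_value s (tail g s.+1).
Proof.
move=> M0s /andP[g_ge0 g_le].
have M0_gt : (L0 + g_max / Q full) / (beta * eps) < s%:R.
  by apply: lt_le_trans (truncnS_gt _) _; rewrite ler_nat.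
have : L0 + g_max / Q full < beta * eps * s%:R.
  by rewrite -ltr_pdivrMl ?beta_eps_gt0 // [ltLHS]mulrC.
have : beta * eps * s%:R <= beta * eps * (s%:R ^+ 2 + 2 * s%:R).
  by rewrite ler_wpM2l ?(ltW beta_eps_gt0) //; have : 0 <= s%:R :> R by []; nra.
have : g / Q full <= g_max / Q full by rewrite ler_pM2r ?invr_gt0 ?Q_full_gt0.
have := tail0_ge0 s.+1.
rewrite /success_value /tail; lra.
Qed.

Fixpoint bellman_iter (g : R) (k s : nat) : R :=
  if k is k'.+1 then bellman s g (bellman_iter g k' s.+1) else tail g s.

Definition V (g : R) (s : nat) : R := bellman_iter g (M0 - s) s.

Lemma V_lt g s : (s < M0)%N -> V g s = bellman s g (V g s.+1).
Proof. by move=> sM0; rewrite /V -subnSK. Qed.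

Lemma V_ge g s : (M0 <= s)%N -> V g s = tail g s.
Proof. by rewrite /V -subn_eq0 => /eqP->. Qed.

Lemma bellman_iter_lipschitz g g' k s : g <= g' ->
  0 <= bellman_iter g k s - bellman_iter g' k s <= (g' - g) * (k%:R + (Q full)^-1).
Proof.
move=> gg'; elim: k s => [|k IH] s /=.
  have -> : tail g s - tail g' s = (g' - g) * (Q full)^-1 by rewrite /tail; ring.
  by rewrite mulr0n add0r lexx andbT mulr_ge0 ?subr_ge0 // invr_ge0 ltW // Q_full_gt0.
have /andP[iter_ge iter_le] := IH s.+1.
have := bellman_lipschitz s gg' _ iter_le; rewrite -subr_ge0 => /(_ iter_ge) /andP[-> le].
by apply: le_trans le _; rewrite -natr1; lra.
Qed.

Lemma V_lipschitz g g' s : g <= g' ->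
  0 <= V g s - V g' s <= (g' - g) * (M0%:R + (Q full)^-1).
Proof.
move=> gg'; have /andP[-> le] := bellman_iter_lipschitz (M0 - s) s gg'.
by apply: le_trans le _; rewrite ler_wpM2l ?subr_ge0 // lerD2r ler_nat leq_subr.
Qed.

Lemma V_le_tail g s : V g s <= tail g s.
Proof.
rewrite /V; move: (M0 - s)%N => k; elim: k s => [|k IH] s //=.
apply: le_trans (bellman_le s g _ a_star) _.
by rewrite [leRHS]tail_bellman Q_a_star lerD2l ler_wpM2l ?subr_ge0 ?Q_le1.
Qed.

Lemma V0_ge0 s : 0 <= V 0 s.
Proof.
rewrite /V; move: (M0 - s)%N => k; elim: k s => [|k IH] s /=.
  by rewrite /tail mul0r subr0 tail0_ge0.
by rewrite /bellman subr0 addr_ge0 ?ucost_ge0 // mulr_ge0 ?subr_ge0 ?Q_le1.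
Qed.

Lemma V1_root : exists2 g, 0 <= g & V g 1 = 0.
Proof.
apply: (@nonincreasing_lipschitz_root _ (V^~ 1%N) (M0%:R + (Q full)^-1) g_max).
- by rewrite ltr_wpDl // invr_gt0 Q_full_gt0.
- by move=> g g'; exact: V_lipschitz.
- exact: V0_ge0.
move=> g V_ge0; have := le_trans V_ge0 (V_le_tail g 1).
by rewrite /tail subr_ge0 ler_pdivrMr ?Q_full_gt0 // mulrC.
Qed.

Section Solution.
Variable g : R.
Hypotheses (g_ge0 : 0 <= g) (V_root : V g 1 = 0).

Definition opt_policy (s : nat) : action N :=
  if (s < M0)%N then best (success_value s (V g s.+1)) else a_star.

Lemma g_le_max : g <= g_max.
Proof.
have := V_le_tail g 1; rewrite V_root /tail subr_ge0 ler_pdivrMr ?Q_full_gt0 //.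
by rewrite mulrC.
Qed.

Lemma opt_policy_bellman s : V g s = u s (opt_policy s) - g + (1 - Q (opt_policy s)) * V g s.+1.
Proof.
rewrite /opt_policy; case: ltnP => sM0; first by rewrite V_lt.
by rewrite !V_ge ?(leq_trans sM0) // tail_bellman.
Qed.

Lemma bellman_ineq s a : V g s <= u s a - g + (1 - Q a) * V g s.+1.
Proof.
have [sM0|M0s] := ltnP s M0; first by rewrite V_lt //; exact: bellman_le.
rewrite !V_ge ?(leq_trans M0s) // tail_bellman !bellman_objectiveE lerD2r.
by apply: a_star_min; apply: success_value_tail_ge; rewrite ?g_ge0 ?g_le_max.
Qed.

Lemma V_mono s : V g s <= V g s.+1.
Proof.
move: {2}(M0 - s)%N (leqnn (M0 - s)) => k; elim: k s => [|k IH] s sk.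
  have M0s : (M0 <= s)%N by lia.
  by rewrite !V_ge ?tail_mono // (leq_trans M0s).
apply: le_trans (bellman_ineq s (opt_policy s.+1)) _.
rewrite [leRHS]opt_policy_bellman lerD ?lerD2r ?ucost_mono //.
by rewrite ler_wpM2l ?subr_ge0 ?Q_le1 ?IH //; lia.
Qed.

Lemma Q_opt_policy_mono s : Q (opt_policy s) <= Q (opt_policy s.+1).
Proof.
rewrite /opt_policy; case: (ltnP s.+1 M0) => sM0.
  rewrite (ltn_trans (ltnSn s) sM0); apply: Q_best_mono; rewrite /success_value.
  apply: lerD; last exact: V_mono.
  rewrite ler_wpM2l ?(ltW beta_eps_gt0) // -natr1.
  by have : 0 <= s%:R :> R by []; nra.
by case: ifP => _; rewrite ?Q_a_star ?Q_le_full.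
Qed.

Lemma opt_policy_const s : (M0 <= s)%N -> opt_policy s = opt_policy M0.
Proof. by move=> M0s; rewrite /opt_policy ltnn ltnNge M0s. Qed.

End Solution.

Local Notation expcost := (expcost p c r beta eps).

Section Verification.
Variables (g : R) (h : nat -> R) (f : nat -> action N) (hmin B C : R).
Hypotheses (g_ge0 : 0 <= g) (B_ge0 : 0 <= B)
  (f_attains : forall s, u s (f s) + Q (f s) * h 1%N + (1 - Q (f s)) * h s.+1 <= h s + g)
  (h_bellman : forall s a, h s + g <= u s a + Q a * h 1%N + (1 - Q a) * h s.+1)
  (h_ge : forall s, hmin <= h s) (h_le : forall s, h s <= B * s%:R ^+ 2 + C).

Lemma expcost_det_le T hist s : expcost (det_policy R f) T hist s <= T%:R * g + h s - hmin.
Proof.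
elim: T hist s => [|T IH] hist s /=; first by rewrite mul0r add0r subr_ge0.
rewrite /det_policy sum_indicator_mul -natr1.
have /andP[q_ge0 q_le1] : 0 <= Q (f s) <= 1 by rewrite Q_ge0 Q_le1.
have := ler_wpM2l q_ge0 (IH (rcons hist (s, f s)) 1%N).
have := ler_wpM2l (_ : 0 <= 1 - Q (f s)) (IH (rcons hist (s, f s)) s.+1).
have := f_attains s; rewrite subr_ge0 => + /(_ q_le1); lra.
Qed.

(* Shrinking h to [theta * h] frees [(1 - theta) * u s a], which by [ucost_ge] pays for the
   cubic correction [D * s^3] compensating the unbounded growth of h. *)
Lemma expcost_ge (pi : policy R N) (g' theta D K : R) : valid_policy pi ->
  0 <= theta <= 1 -> 0 <= D -> 3 * D <= (1 - theta) * (beta * eps) -> D <= theta * g - g' ->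
  (forall s, theta * h s <= K + D * s%:R ^+ 3) ->
  forall T hist s, T%:R * g' + theta * h s - K - D * s%:R ^+ 3 <= expcost pi T hist s.
Proof.
case=> pi_ge0 pi_sum /andP[theta_ge0 theta_le1] D_ge0 D_le D_gap h_cubic.
elim=> [|T IH] hist s /=; first by have := h_cubic s; rewrite mul0r; lra.
set lhs := _ - _; have -> : lhs = \sum_(a : action N) pi hist s a * lhs.
  by rewrite -mulr_suml pi_sum mul1r.
apply: ler_sum => a _; apply: ler_wpM2l; first exact: pi_ge0.
have /andP[q_ge0 q_le1] : 0 <= Q a <= 1 by rewrite Q_ge0 Q_le1.
have q'_ge0 : 0 <= 1 - Q a by rewrite subr_ge0.
have := ler_wpM2l q_ge0 (IH (rcons hist (s, a)) 1%N).
have := ler_wpM2l q'_ge0 (IH (rcons hist (s, a)) s.+1).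
have := ler_wpM2l theta_ge0 (h_bellman s a).
have := ler_wpM2l (_ : 0 <= 1 - theta) (ucost_ge s a); rewrite subr_ge0 => /(_ theta_le1).
have : 3 * D * ((1 - Q a) * (1 + s%:R) ^+ 2) <=
       (1 - theta) * (beta * eps) * ((1 - Q a) * (1 + s%:R) ^+ 2).
  by rewrite ler_wpM2r // mulr_ge0 ?sqr_ge0.
have := ler_wpM2l D_ge0 (succ_cube_convex_le (_ : 0 <= Q a <= 1) (ler0n _ s)).
rewrite q_ge0 q_le1 => /(_ isT).
rewrite /lhs mulr1n expr1n mulr1 -!natr1; lra.
Qed.

Lemma avg_cost_det_le : (avg_cost p c r beta eps (det_policy R f) <= g%:E)%E.
Proof.
apply: (@limn_esup_le_add_div _ _ g (h 1%N - hmin)) => n n_gt0.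
rewrite ler_pdivrMr ?ltr0n // mulrDl divfK ?gt_eqF ?ltr0n // mulrC.
by have := expcost_det_le n [::] 1%N; lra.
Qed.

Lemma avg_cost_ge (pi : policy R N) : valid_policy pi ->
  (g%:E <= avg_cost p c r beta eps pi)%E.
Proof.
move=> pi_valid; apply/lee_subgt0Pr => e e_gt0; rewrite -EFinB.
have ge_gt0 : 0 < g + e by rewrite ltr_wpDl.
pose theta := g / (g + e).
have theta_range : 0 <= theta <= 1.
  by rewrite /theta divr_ge0 ?(ltW ge_gt0) //= ler_pdivrMr // mul1r lerDl (ltW e_gt0).
have theta_gap : theta * g - (g - e) = e ^+ 2 / (g + e) by rewrite /theta; field; rewrite gt_eqF.
have one_sub_theta : 1 - theta = e / (g + e) by rewrite /theta; field; rewrite gt_eqF.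
pose D := Num.min ((1 - theta) * (beta * eps) / 3) (theta * g - (g - e)).
have D_gt0 : 0 < D.
  rewrite /D lt_min theta_gap one_sub_theta; apply/andP; split.
    by rewrite !divr_gt0 // mulr_gt0 ?divr_gt0 // beta_eps_gt0.
  by rewrite divr_gt0 // exprn_gt0.
have D_le : 3 * D <= (1 - theta) * (beta * eps).
  by rewrite mulrC -ler_pdivlMr // ge_min lexx.
have D_gap : D <= theta * g - (g - e) by rewrite ge_min lexx orbT.
pose K := `|C| + B ^+ 3 / D ^+ 2.
have h_cubic s : theta * h s <= K + D * s%:R ^+ 3.
  have := mul_sqr_le_cube_add B_ge0 D_gt0 (ler0n _ s).
  have := h_le s; have := ler_norm C.
  have [h_ge0|h_lt0] := lerP 0 (h s).
    have : theta * h s <= h s by case/andP: theta_range => _ theta_le1; rewrite ler_piMl.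
    rewrite /K; lra.
  have : theta * h s <= 0.
    by case/andP: theta_range => theta_ge0 _; rewrite mulr_ge0_le0 // ltW.
  have : 0 <= B ^+ 3 / D ^+ 2 by rewrite divr_ge0 ?exprn_ge0 // ltW.
  have : 0 <= D * s%:R ^+ 3 by rewrite mulr_ge0 ?exprn_ge0 // ltW.
  have := normr_ge0 C; rewrite /K; lra.
apply: (@limn_esup_ge_sub_div _ _ (g - e) (K + D - theta * h 1%N)) => n n_gt0.
have := expcost_ge pi_valid theta_range (ltW D_gt0) D_le D_gap h_cubic n [::] 1%N.
rewrite expr1n mulr1 ler_pdivlMr ?ltr0n // mulrBl divfK ?gt_eqF ?ltr0n // mulrC; lra.
Qed.

Lemma det_policy_optimal : optimal p c r beta eps f.
Proof. by move=> pi pi_valid; apply: le_trans avg_cost_det_le (avg_cost_ge pi_valid). Qed.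

End Verification.

Theorem exists_optimal_policy_Q_mono : exists (f : nat -> action N) (M : nat),
  [/\ optimal p c r beta eps f, forall s, Q (f s) <= Q (f s.+1) &
      forall s, (M <= s)%N -> f s = f M].
Proof.
have [g g_ge0 V_root] := V1_root.
exists (opt_policy g), M0; split; [|exact: Q_opt_policy_mono | exact: opt_policy_const].
apply: (@det_policy_optimal g (V g) _ (V g 0%N) (tail_c2 + tail_c1) (tail_c0 - g / Q full)) => //.
- by case: tail_coefs_ge0 => *; rewrite addr_ge0.
- by move=> s; rewrite V_root mulr0 addr0; have := opt_policy_bellman g s; lra.
- by move=> s a; rewrite V_root mulr0 addr0; have := bellman_ineq g_ge0 V_root s a; lra.
- move=> s; elim: s => // s IH; exact: le_trans IH (V_mono g_ge0 V_root s).
- by move=> s; apply: le_trans (V_le_tail g s) (tail_le_quadratic g s).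
Qed.

End Model.

Theorem proposition1 (R : realType) (N : nat) (p c r : 'I_N -> R) (beta eps : R) :
  (0 < N)%N ->
  (forall n, 0 < p n <= 1) ->
  (forall n, 0 <= c n) ->
  (forall n, 0 < r n <= 1) ->
  0 < beta < 1 ->
  0 < eps ->
  exists (phi : nat -> action N) (K : nat) (b : nat -> action N) (theta : nat -> nat),
    [/\ threshold_type phi K b theta,
        (forall k, (1 <= k < K)%N -> Qa r p (b k) <= Qa r p (b k.+1)) &
        optimal p c r beta eps phi].
Proof.
move=> N_gt0 p_range c_ge0 r_range beta_range eps_gt0.
have [f [M [f_opt f_mono f_const]]] :=
  exists_optimal_policy_Q_mono N_gt0 p_range c_ge0 r_range beta_range eps_gt0.
have f_const' s : (M.+1 <= s)%N -> f s = f M.+1 by move=> Ms; rewrite !f_const // ltnW.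
have [K [b [theta [f_thr _ _ b_mono]]]] :=
  threshold_type_of_eventually_constant (F := Qa p r) f_const' f_mono.
by exists f, K, b, theta; split=> // k /b_mono; rewrite !(QaC p r).
Qed.
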